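(* If $p=p(n)\to0$ and $np\to\infty$ as $n\to\infty$, then a.a.s. $\Gamma\in G(n,p)$ has no domination diamonds.
   Context: $G(n,p)$ is the Erdős–Rényi random graph on $n$ vertices with each edge present independently with probability $p$; a.a.s. means with probability tending to $1$. For distinct vertices $x,y$, $x>y$ means every neighbour of $y$ is adjacent to or equal to $x$. A domination diamond is a quadruple $(a,b,c,d)$ of distinct vertices with $a\sim b\sim c\sim d\sim a$, $a\not\sim c$, $b\not\sim d$, and $a>c$. *)

From HB Require Import structures.
From mathcomp Require Import all_boot all_order all_algebra.
From mathcomp Require Import all_classical all_reals.
From mathcomp Require Import topology normedtype sequences.
Set Implicit Arguments. Unset Strict Implicit. Unset Printing Implicit Defensive.
Import Order.TTheory GRing.Theory Num.Theory.
Local Open Scope ring_scope.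

(* A graph on vertex set 'I_n is encoded by a set E of ordered pairs; in the
   Erdos-Renyi model only "upper" sets (pairs (i,j) with i < j) get positive
   weight, each such pair encoding the undirected edge {i,j}. *)
Definition upper n (E : {set 'I_n * 'I_n}) : bool :=
  [forall pr in E, (pr.1 < pr.2)%N].

Definition adj n (E : {set 'I_n * 'I_n}) (x y : 'I_n) : bool :=
  (x != y) && (((x, y) \in E) || ((y, x) \in E)).

Definition dominates n (E : {set 'I_n * 'I_n}) (x y : 'I_n) : bool :=
  [forall z, adj E y z ==> (adj E x z || (z == x))].

Definition is_domination_diamond n (E : {set 'I_n * 'I_n}) (a b c d : 'I_n) : bool :=
  [&& uniq [:: a; b; c; d],
      adj E a b, adj E b c, adj E c d, adj E d a,
      ~~ adj E a c, ~~ adj E b d & dominates E a c].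

Definition has_domination_diamond n (E : {set 'I_n * 'I_n}) : bool :=
  [exists a, exists b, exists c, exists d, is_domination_diamond E a b c d].

Definition gnp_weight {R : realType} n (p : R) (E : {set 'I_n * 'I_n}) : R :=
  if upper E then
    \prod_(pr : 'I_n * 'I_n | (pr.1 < pr.2)%N) (if pr \in E then p else 1 - p)
  else 0.

Definition gnp_prob {R : realType} n (p : R) (A : pred {set 'I_n * 'I_n}) : R :=
  \sum_(E : {set 'I_n * 'I_n} | A E) gnp_weight p E.

From HB Require Import structures.
From mathcomp Require Import all_boot all_order all_algebra.
From mathcomp Require Import ring lra zify.
Import Order.TTheory GRing.Theory Num.Theory.
Local Open Scope ring_scope.

(* Union bound over the n^4 quadruples.  For distinct a, b, c, d, a domination
   diamond (a,b,c,d) needs the four edges of the cycle and, since a > c, the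
   implication z ~ c => z ~ a for every other vertex z.  These conditions
   concern the pairwise disjoint pairs {zc, za}, so they are independent and
   the diamond has probability at most p^4 (1 - p(1 - p))^(n-4), which is at
   most p^4 exp(-(n-4)p/2).  Summing, the probability of a diamond is at most
   (np)^4 exp(-np/4) = O(1/(np)), which tends to 0. *)
Section BernoulliSubset.
Context {R : realFieldType} {T : finType} {q : R}.
Implicit Types (U E : {set T}) (G F : {set T} -> R).

Definition bern_weight U E : R := \prod_(u in U) (if u \in E then q else 1 - q).

(* The expectation of [G E] for a random subset [E] of [U] containing each
   element independently with probability [q]. *)
Definition bernE U G : R := \sum_(E in powerset U) bern_weight U E * G E.

Lemma eq_bernE {U G G'} : {in powerset U, G =1 G'} -> bernE U G = bernE U G'.
Proof. by move=> eqG; apply: eq_bigr => E /eqG ->. Qed.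

Lemma bernE_set0 G : bernE set0 G = G set0.
Proof. by rewrite /bernE powerset0 big_set1 /bern_weight big_set0 mul1r. Qed.

Lemma bernE_set1 x G : bernE [set x] G = (1 - q) * G set0 + q * G [set x].
Proof.
rewrite /bernE powerset1 big_setU1 /=; last first.
  by rewrite inE eq_sym; apply/eqP => /setP /(_ x); rewrite !inE eqxx.
by rewrite big_set1 /bern_weight !big_set1 !inE eqxx.
Qed.

Lemma bern_weightI U E : bern_weight U (E :&: U) = bern_weight U E.
Proof. by apply: eq_bigr => u uU; rewrite inE uU andbT. Qed.

Lemma bern_weightU U1 U2 E : [disjoint U1 & U2] ->
  bern_weight (U1 :|: U2) E = bern_weight U1 E * bern_weight U2 E.
Proof.
by move=> dis; rewrite /bern_weight (eq_bigl [predU U1 & U2]) ?bigU // => u; rewrite inE.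
Qed.

Lemma setUIl_disjoint U1 U2 E1 E2 : [disjoint U1 & U2] ->
  E1 \subset U1 -> E2 \subset U2 -> (E1 :|: E2) :&: U1 = E1.
Proof.
move=> dis sE1 sE2; rewrite setIUl (setIidPl sE1) disjoint_setI0 ?setU0 //.
by apply: disjointWl sE2 _; rewrite disjoint_sym.
Qed.

Lemma bernE_setU U1 U2 G1 G2 F : [disjoint U1 & U2] ->
  {in powerset (U1 :|: U2), forall E, F E = G1 (E :&: U1) * G2 (E :&: U2)} ->
  bernE (U1 :|: U2) F = bernE U1 G1 * bernE U2 G2.
Proof.
move=> dis eqF; rewrite (eq_bernE eqF) /bernE big_distrlr pair_big_dep /=.
rewrite (reindex_onto (fun j => j.1 :|: j.2) (fun E => (E :&: U1, E :&: U2))) /=;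
  last by move=> E; rewrite powersetE -setIUr => /setIidPl.
have splitU E1 E2 : E1 \subset U1 -> E2 \subset U2 ->
    (E1 :|: E2) :&: U1 = E1 /\ (E1 :|: E2) :&: U2 = E2.
  move=> s1 s2; split; first exact: setUIl_disjoint dis s1 s2.
  by rewrite setUC (@setUIl_disjoint U2 U1 E2 E1 _ s2 s1) // disjoint_sym.
apply: eq_big => [[E1 E2]|[E1 E2]] /=.
  rewrite !powersetE; apply/andP/andP => [[_ /eqP[e1 e2]]|[s1 s2]].
    by rewrite -e1 subsetIr -e2 subsetIr.
  by case: (splitU _ _ s1 s2) => -> ->; rewrite setUSS.
move=> /andP[_ /eqP[e1 e2]]; rewrite e1 e2 bern_weightU //.
by rewrite -(bern_weightI U1) -(bern_weightI U2) e1 e2 mulrACA.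
Qed.
Lemma bernE_bigcup (I : finType) (r : seq I) (B : I -> {set T})
    (G : I -> {set T} -> R) :
  uniq r -> {in r &, forall i j, i != j -> [disjoint B i & B j]} ->
  bernE (\bigcup_(i <- r) B i) (fun E => \prod_(i <- r) G i (E :&: B i)) =
  \prod_(i <- r) bernE (B i) (G i).
Proof.
elim: r => [|i r IH] /=; first by rewrite !big_nil bernE_set0 big_nil.
case/andP=> ir ur dis; rewrite !big_cons -IH //; last first.
  by move=> j k jr kr; apply: dis; rewrite inE ?jr ?kr orbT.
apply: bernE_setU => [|E _].
  rewrite bigcup_seq; apply: bigcup_disjoint => j jr.
  by apply: dis; rewrite ?inE ?eqxx ?jr ?orbT //; apply: contraNneq ir => ->.
rewrite big_cons; congr (_ * _); apply: eq_big_seq => j jr.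
have sBj : B j \subset \bigcup_(k <- r) B k by rewrite bigcup_seq bigcup_sup.
by rewrite -setIA (setIidPr sBj).
Qed.

Lemma bernE1 U : bernE U (fun=> 1) = 1.
Proof.
have U_eq : \bigcup_(u <- enum U) [set u] = U.
  apply/setP => x; rewrite bigcup_seq; apply/bigcupP/idP => [[y]|xU].
    by rewrite mem_enum inE => yU /eqP ->.
  by exists x; rewrite ?mem_enum ?inE.
have disU : {in enum U &, forall u v, u != v -> [disjoint [set u] & [set v]]}.
  by move=> u v _ _ uv; rewrite disjoints1 inE.
have := @bernE_bigcup _ _ _ (fun _ _ => 1) (enum_uniq U) disU.
rewrite U_eq (eq_bernE (G' := fun=> 1)) => [->|E _]; last by rewrite big1.
by rewrite big1 // => u _; rewrite bernE_set1; ring.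
Qed.

Lemma bernEB U G G' : bernE U (fun E => G E - G' E) = bernE U G - bernE U G'.
Proof. by rewrite /bernE -sumrB; apply: eq_bigr => E _; rewrite mulrBr. Qed.

Lemma ler_bernE {U G G'} : 0 <= q <= 1 ->
  {in powerset U, forall E, G E <= G' E} -> bernE U G <= bernE U G'.
Proof.
move=> /andP[q0 q1] leG; apply: ler_sum => E UE; apply: ler_wpM2l (leG E UE).
by apply: prodr_ge0 => u _; case: ifP; rewrite ?subr_ge0.
Qed.

Lemma bernE_and x y : x != y ->
  bernE [set x; y] (fun E => ((x \in E) && (y \in E))%:R) = q * q.
Proof.
move=> xy; rewrite (@bernE_setU _ _ (fun E => (x \in E)%:R) (fun E => (y \in E)%:R)).
- by rewrite !bernE_set1 !inE !eqxx /=; ring.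
- by rewrite disjoints1 inE.
- by move=> E _; rewrite !inE !eqxx !andbT; case: (x \in E); rewrite ?mul1r ?mul0r.
Qed.

Lemma bernE_implies x y : x != y ->
  bernE [set x; y] (fun E => ((x \in E) ==> (y \in E))%:R) = 1 - q * (1 - q).
Proof.
move=> xy; rewrite (eq_bernE (G' := fun E => 1 - ((x \in E) && (y \notin E))%:R)).
  rewrite bernEB bernE1 (@bernE_setU _ _ (fun E => (x \in E)%:R) (fun E => (y \notin E)%:R)).
  - by rewrite !bernE_set1 !inE !eqxx /=; ring.
  - by rewrite disjoints1 inE.
  - by move=> E _; rewrite !inE !eqxx !andbT; case: (x \in E); rewrite ?mul1r ?mul0r.
by move=> E _; case: (x \in E); case: (y \in E); rewrite /= ?subr0 ?subrr.
Qed.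
End BernoulliSubset.
Arguments bern_weight {R T} q U E.
Arguments bernE {R T} q U G.

Section UpperPairs.
Context {n : nat}.
Implicit Types (x y u v : 'I_n) (E : {set 'I_n * 'I_n}).

Definition epair x y : 'I_n * 'I_n := if (x < y)%N then (x, y) else (y, x).

Definition upper_pairs : {set 'I_n * 'I_n} := [set pr : 'I_n * 'I_n | (pr.1 < pr.2)%N].

Lemma epairC x y : epair x y = epair y x.
Proof. by rewrite /epair; case: (ltngtP x y) => // /val_inj ->. Qed.

Lemma epair_inj x y u v :
  epair x y = epair u v -> (x = u /\ y = v) \/ (x = v /\ y = u).
Proof.
by rewrite /epair; case: ltnP => _; case: ltnP => _ [-> ->]; [left|right|right|left].
Qed.

Lemma epair_upper x y : x != y -> epair x y \in upper_pairs.
Proof.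
move=> xy; rewrite inE /epair; case: (ltngtP x y) => //= /val_inj eq_xy.
by rewrite eq_xy eqxx in xy.
Qed.

Lemma upperE E : upper E = (E \subset upper_pairs).
Proof. by apply/forall_inP/subsetP => sE pr /sE; rewrite ?inE. Qed.

Lemma adj_upper {E} : upper E -> forall x y, adj E x y = (x != y) && (epair x y \in E).
Proof.
move=> /forall_inP upE x y; rewrite /adj /epair.
case: (ltngtP x y) => [xy|yx|/val_inj ->]; last by rewrite eqxx.
- by case: ((y, x) \in E) /idP => [/upE /=|]; rewrite ?orbF // ltnNge ltnW.
- by case: ((x, y) \in E) /idP => [/upE /=|] //; rewrite ltnNge ltnW.
Qed.
End UpperPairs.
Arguments upper_pairs n : clear implicits.

Section DiamondProbability.
Variables (R : realFieldType) (n : nat) (p : R) (a b c d : 'I_n).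
Hypothesis abcd : uniq [:: a; b; c; d].
Implicit Types (z : 'I_n) (E : {set 'I_n * 'I_n}).

Let abcd_neq : [/\ a != b, a != c & a != d] /\ [/\ b != c, b != d & c != d].
Proof.
by move: abcd; rewrite /= !inE !negb_or => /and4P[/and3P[-> -> ->] /andP[-> ->] ->].
Qed.

Definition spoke z : {set 'I_n * 'I_n} :=
  if (z == a) || (z == c) then set0 else [set epair z c; epair z a].

(* A diamond [(a,b,c,d)] needs both pairs of the spoke of [b] and of [d] (they
   are cycle edges), and, because [a > c], a neighbour [z] of [c] must be a
   neighbour of [a]. *)
Definition spoke_ok z E : bool :=
  if (z == a) || (z == c) then true
  else if (z == b) || (z == d) then (epair z c \in E) && (epair z a \in E)
  else (epair z c \in E) ==> (epair z a \in E).

Lemma spoke_disjoint z z' : z != z' -> [disjoint spoke z & spoke z'].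
Proof.
move=> zz'; rewrite /spoke; case: ifP => hz; first by rewrite disjoints_subset sub0set.
case: ifP => _; first by rewrite disjoint_sym disjoints_subset sub0set.
rewrite -setI_eq0; apply/eqP/setP => w; rewrite !inE; apply/negP.
case/andP => /orP[] /eqP -> /orP[] /eqP /epair_inj [[e _]|[e _]];
  by move: zz' hz; rewrite e eqxx ?orbT.
Qed.

Lemma spoke_upper z : spoke z \subset upper_pairs n.
Proof.
rewrite /spoke; case: ifP => [_|/negbT]; first exact: sub0set.
by rewrite negb_or subUset !sub1set => /andP[za zc]; rewrite !epair_upper.
Qed.

Lemma diamond_spoke_ok E z :
  upper E -> is_domination_diamond E a b c d -> spoke_ok z (E :&: spoke z).
Proof.
move=> upE /and5P[_ ab bc cd /and4P[da _ _ /forallP a_dom_c]].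
rewrite !(adj_upper upE) in ab bc cd da.
rewrite /spoke_ok /spoke; case: ifP => // /negbT; rewrite negb_or => /andP[za zc].
rewrite (negbTE za) (negbTE zc) /= !inE !eqxx orbT !andbT.
case: ifP => [/orP[]/eqP ->|_].
- by case/andP: bc => _ ->; rewrite epairC; case/andP: ab.
- by case/andP: cd => _; rewrite epairC => ->; case/andP: da.
apply/implyP => zcE; have /implyP := a_dom_c z.
rewrite !(adj_upper upE) eq_sym zc epairC zcE (negbTE za) orbF.
by move=> /(_ isT) /andP[_]; rewrite epairC.
Qed.

Lemma bernE_spoke_ok z :
  bernE p (spoke z) (fun E => (spoke_ok z E)%:R) =
  if (z == a) || (z == c) then 1
  else if (z == b) || (z == d) then p * p else 1 - p * (1 - p).
Proof.
have [[_ ac _] _] := abcd_neq.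
rewrite /spoke /spoke_ok; case: ifP => [_|/negbT]; first by rewrite bernE_set0.
rewrite negb_or => /andP[za zc].
have zc_za : epair z c != epair z a.
  by apply/eqP => /epair_inj [[_ /eqP]|[/eqP]]; rewrite ?(negbTE za) // eq_sym (negbTE ac).
by case: ifP => _; rewrite ?bernE_and ?bernE_implies.
Qed.

Lemma prod_bernE_spoke_ok :
  \prod_(z <- enum 'I_n) bernE p (spoke z) (fun E => (spoke_ok z E)%:R) =
  p ^+ 4 * (1 - p * (1 - p)) ^+ (n - 4).
Proof.
have [[ab ac ad] [bc bd cd]] := abcd_neq.
rewrite (eq_bigr _ (fun z _ => bernE_spoke_ok z)) big_enum /=.
rewrite (bigID (mem [:: a; b; c; d])) /= -big_uniq //= !big_cons big_nil.
rewrite !eqxx orbT [b == a]eq_sym [d == a]eq_sym [d == c]eq_sym.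
rewrite (negbTE ab) (negbTE bc) (negbTE ad) (negbTE cd) /= orbT.
congr (_ * _); first by ring.
rewrite (eq_bigr (fun _ => 1 - p * (1 - p))) => [|z]; last first.
  by rewrite !inE !negb_or => /and4P[/negbTE-> /negbTE-> /negbTE-> /negbTE->].
rewrite prodr_const; congr (_ ^+ _).
have := cardC (mem [:: a; b; c; d]).
rewrite card_ord (card_uniqP abcd) => n_eq.
by rewrite -[X in _ = (X - 4)%N]n_eq addKn.
Qed.

Lemma diamond_bernE_le : 0 <= p <= 1 ->
  bernE p (upper_pairs n) (fun E => (is_domination_diamond E a b c d)%:R) <=
  p ^+ 4 * (1 - p * (1 - p)) ^+ (n - 4).
Proof.
move=> p01; set S := \bigcup_(z <- enum 'I_n) spoke z.
have sSU : S \subset upper_pairs n.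
  by rewrite /S bigcup_seq; apply/bigcupsP => z _; exact: spoke_upper.
have spoke_S z : spoke z \subset S by rewrite /S bigcup_seq bigcup_sup ?mem_enum.
pose G E : R := \prod_(z <- enum 'I_n) (spoke_ok z (E :&: spoke z))%:R.
apply: (le_trans (ler_bernE (G' := G) p01 _)) => [E|].
  rewrite powersetE -upperE => upE.
  have [dd|_] := boolP (is_domination_diamond E a b c d).
    by rewrite /G big1 // => z _; rewrite diamond_spoke_ok.
  by apply: prodr_ge0 => z _; exact: ler0n.
rewrite -(setID (upper_pairs n) S) (setIidPr sSU).
rewrite (@bernE_setU _ _ _ _ _ G (fun=> 1)) ?bernE1 ?mulr1.
- rewrite (@bernE_bigcup _ _ _ _ _ _ (fun z E => (spoke_ok z E)%:R)) ?enum_uniq //.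
    by rewrite prod_bernE_spoke_ok.
  by move=> z z' _ _; exact: spoke_disjoint.
- by rewrite disjoints_subset setCD subsetUr.
- move=> E _; rewrite mulr1; apply: eq_bigr => z _.
  by rewrite -setIA (setIidPr (spoke_S z)).
Qed.
End DiamondProbability.

(* Imported only now: the classical set library shadows the finset names used above. *)
From mathcomp Require Import all_classical all_reals topology normedtype sequences exp.
Import numFieldNormedType.Exports.
Local Open Scope classical_set_scope.
Local Open Scope ring_scope.

Section GnpUnionBound.
Context {R : realType} {n : nat} {p : R}.
Hypothesis p01 : 0 <= p <= 1.
Implicit Types (A : pred {set 'I_n * 'I_n}) (E : {set 'I_n * 'I_n}).

Lemma gnp_probE A : gnp_prob p A = bernE p (upper_pairs n) (fun E => (A E)%:R).
Proof.
rewrite /gnp_prob /bernE big_mkcond [RHS]big_mkcond; apply: eq_bigr => E _.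
rewrite /gnp_weight upperE powersetE.
case: (E \subset _); case: (A E); rewrite /= ?mulr1 ?mulr0 //.
by apply: eq_bigl => pr; rewrite inE.
Qed.

Lemma gnp_weight_ge0 E : 0 <= gnp_weight p E.
Proof.
case/andP: p01 => p0 p1; rewrite /gnp_weight; case: ifP => // _.
by apply: prodr_ge0 => pr _; case: ifP; rewrite ?subr_ge0.
Qed.

Lemma gnp_prob_ge0 A : 0 <= gnp_prob p A.
Proof. by apply: sumr_ge0 => E _; exact: gnp_weight_ge0. Qed.

Lemma gnp_prob_le_sum (I : finType) A (B : I -> pred {set 'I_n * 'I_n}) :
  (forall E, A E -> exists i, B i E) ->
  gnp_prob p A <= \sum_(i : I) gnp_prob p (B i).
Proof.
move=> AB; rewrite /gnp_prob big_mkcond /=.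
under [X in _ <= X]eq_bigr do rewrite big_mkcond.
rewrite [X in _ <= X]exchange_big /=; apply: ler_sum => E _.
have wi_ge0 i : 0 <= (if B i E then gnp_weight p E else 0).
  by case: ifP; rewrite ?gnp_weight_ge0.
case: ifP => [/AB[i BiE]|_]; last exact: sumr_ge0.
by rewrite (bigD1 i) //= BiE lerDl sumr_ge0.
Qed.

Lemma has_diamond_prob_le :
  gnp_prob p (fun E => has_domination_diamond E) <=
  (n ^ 4)%:R * (p ^+ 4 * (1 - p * (1 - p)) ^+ (n - 4)).
Proof.
pose D (t : 'I_n * 'I_n * 'I_n * 'I_n) E :=
  is_domination_diamond E t.1.1.1 t.1.1.2 t.1.2 t.2.
apply: le_trans (@gnp_prob_le_sum _ _ D _) _.
  by move=> E /existsP[a /existsP[b /existsP[c /existsP[d abcd]]]]; exists (a, b, c, d).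
rewrite (eq_bigr _ (fun t _ => gnp_probE (D t))).
have D_le t : bernE p (upper_pairs n) (fun E => (D t E)%:R) <=
    p ^+ 4 * (1 - p * (1 - p)) ^+ (n - 4).
  have [abcd|not_uniq] := boolP (uniq [:: t.1.1.1; t.1.1.2; t.1.2; t.2]).
    exact: diamond_bernE_le.
  rewrite /D /bernE big1 => [|E _]; last first.
    by rewrite /is_domination_diamond (negbTE not_uniq) mulr0.
  by case/andP: p01 => p0 p1; rewrite mulr_ge0 ?exprn_ge0 //; nra.
apply: le_trans (ler_sum _ (fun t _ => D_le t)) _.
by rewrite sumr_const !card_prod card_ord mulr_natl !expnS expn0 muln1 !mulnA.
Qed.
End GnpUnionBound.

Section Asymptotics.
Context {R : realType}.
Implicit Types (p x : R).

Lemma expR_ge_pow5 x : 0 <= x -> (x / 20) ^+ 5 <= expR (x / 4).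
Proof.
move=> x0; rewrite (_ : x / 4 = 5%:R * (x / 20)); last by field.
rewrite expRM_natl; apply: lerXn2r; rewrite ?nnegrE ?expR_ge0 ?divr_ge0 //.
by apply: le_trans (expR_ge1Dx _); lra.
Qed.

Lemma pow4_expRN_le x : 0 < x -> x ^+ 4 * expR (- (x / 4)) <= 20 ^+ 5 / x.
Proof.
move=> x0; have := expR_ge_pow5 x (ltW x0).
rewrite expRN exprMn exprVn ler_pdivrMr ?exprn_gt0 // => pow5_le.
rewrite ler_pdivrMr ?expR_gt0 // mulrAC ler_pdivlMr // -exprSr.
by rewrite mulrC.
Qed.

Lemma one_sub_mul_le_expR p : 0 <= p <= 1 / 2 -> 1 - p * (1 - p) <= expR (- (p / 2)).
Proof. by move=> /andP[p0 p1]; apply: le_trans (expR_ge1Dx _); nra. Qed.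

Lemma diamond_count_le n p : 0 < p <= 1 / 2 -> (8 <= n)%N ->
  (n ^ 4)%:R * (p ^+ 4 * (1 - p * (1 - p)) ^+ (n - 4)) <= 20 ^+ 5 / (n%:R * p).
Proof.
move=> /andP[p0 p_half] n8; set x := n%:R * p.
have x0 : 0 < x by rewrite mulr_gt0 // ltr0n; lia.
have decay : (1 - p * (1 - p)) ^+ (n - 4) <= expR (- (x / 4)).
  have base_le : 1 - p * (1 - p) <= expR (- (p / 2)).
    by apply: one_sub_mul_le_expR; rewrite p_half ltW.
  apply: le_trans (lerXn2r _ _ _ base_le) _; rewrite ?nnegrE ?expR_ge0 //; first nra.
  rewrite -expRM_natl ler_expR natrB; last lia.
  have : (8 : R) <= n%:R by rewrite (ler_nat R 8 n).
  by rewrite /x; nra.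
apply: le_trans _ (pow4_expRN_le _ x0).
by rewrite mulrA natrX -exprMn ler_wpM2l ?exprn_ge0 ?(ltW x0).
Qed.
End Asymptotics.

Lemma has_diamond_prob_le_inv (R : realType) n (p : R) :
  0 < p <= 1 / 2 -> (8 <= n)%N ->
  gnp_prob p (fun E : {set 'I_n * 'I_n} => has_domination_diamond E) <=
  20 ^+ 5 / (n%:R * p).
Proof.
move=> p_small n8; have p01 : 0 <= p <= 1.
  by case/andP: p_small => p0 p_half; rewrite ltW //=; lra.
exact: le_trans (has_diamond_prob_le p01) (diamond_count_le _ _ p_small n8).
Qed.

Theorem proposition2p12 (R : realType) (p : nat -> R)
  (hp01 : forall n, 0 <= p n <= 1)
  (hp0 : p @ \oo --> 0)
  (hnp : (fun n => n%:R * p n) @ \oo --> +oo) :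
  (fun n => gnp_prob (p n) (fun E : {set 'I_n * 'I_n} => has_domination_diamond E))
    @ \oo --> 0.
Proof.
have np_gt0 : \forall n \near \oo, 0 < n%:R * p n by move/cvgryPgt: hnp; apply.
have p_half : \forall n \near \oo, p n <= 1 / 2 by apply: cvgr_le hp0 _ _; lra.
apply: (@squeeze_cvgr _ _ _ _ (cst 0) (fun n => 20 ^+ 5 / (n%:R * p n))).
- near=> n; rewrite gnp_prob_ge0 ?hp01 //=.
  have /andP[p0 _] := hp01 n.
  have np0 : 0 < n%:R * p n by near: n.
  apply: has_diamond_prob_le_inv; last by near: n; exact: nbhs_infty_ge.
  rewrite lt_def p0 andbT; apply/andP; split; last by near: n.
  by apply: contraTneq np0 => ->; rewrite mulr0 ltxx.
- exact: cvg_cst.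
- rewrite -(mulr0 (20 ^+ 5)); apply: cvgMr.
  by apply/gtr0_cvgV0 => //; near=> n; near: n.
Unshelve. all: by end_near.
Qed.
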